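(* Let $n_{\mathrm{in}}\in\mathbb{N}$, let $\Omega\subset\mathbb{R}^{n_{\mathrm{in}}}$ be compact and let $f:\Omega\to\mathbb{R}$ be continuous. For every $\epsilon>0$ there exists a discrete-time LIF-SNN $\Phi$ with direct encoding, membrane potential output, $L=2$ hidden layers and latency $T=1$ such that $\sup_{x\in\Omega}|R(\Phi)(x)-f(x)|\le\epsilon$. Moreover, if $f$ is $\Gamma$-Lipschitz with respect to $\|\cdot\|_\infty$ (i.e. $|f(x)-f(y)|\le\Gamma\|x-y\|_\infty$ for all $x,y\in\Omega$), then $\Phi$ can be chosen with hidden-layer widths $n_1=\Big(\max\Big\{\Big\lceil\frac{\operatorname{diam}_\infty(\Omega)}{\epsilon}\Gamma\Big\rceil,1\Big\}+1\Big)n_{\mathrm{in}}$ and $n_2=\max\Big\{\Big\lceil\frac{\operatorname{diam}_\infty(\Omega)}{\epsilon}\Gamma\Big\rceil^{n_{\mathrm{in}}},1\Big\}$, where $\operatorname{diam}_\infty(\Omega)=\sup_{x,y\in\Omega}\|x-y\|_\infty$.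
   Context: A discrete-time LIF-SNN $\Phi$ with $L$ hidden layers of widths $n_1,\dots,n_L$, input dimension $n_0=n_{\mathrm{in}}$, output dimension $n_{\mathrm{out}}$ and latency $T\in\mathbb{N}$ has parameters $W^\ell\in\mathbb{R}^{n_\ell\times n_{\ell-1}}$, $b^\ell\in\mathbb{R}^{n_\ell}$, $u^\ell(0)\in\mathbb{R}^{n_\ell}$, $\beta^\ell\in[0,1]$, $\vartheta^\ell>0$ ($\ell\in[L]$). With direct encoding, the initial spike activations are $s^0(t)=x$ for all $t\in[T]$, where $x\in\mathbb{R}^{n_{\mathrm{in}}}$ is the input. For $\ell\in[L]$, $t\in[T]$: $s^\ell(t)=H(\beta^\ell u^\ell(t-1)+W^\ell s^{\ell-1}(t)+b^\ell-\vartheta^\ell\mathbf{1})$ and $u^\ell(t)=\beta^\ell u^\ell(t-1)+W^\ell s^{\ell-1}(t)+b^\ell-\vartheta^\ell s^\ell(t)$, with $H$ the entrywise Heaviside function ($H(z)=1$ if $z\ge0$, else $0$). With membrane potential output, the realization is $R(\Phi)(x)=\sum_{t=1}^T a_t\,(V s^L(t)+c)\in\mathbb{R}^{n_{\mathrm{out}}}$ for decoder parameters $a\in\mathbb{R}^T$, $V\in\mathbb{R}^{n_{\mathrm{out}}\times n_L}$, $c\in\mathbb{R}^{n_{\mathrm{out}}}$. Here $n_{\mathrm{out}}=1$. *)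

From HB Require Import structures.
From mathcomp Require Import all_boot all_order all_algebra.
From mathcomp Require Import all_classical all_reals all_analysis.
Set Implicit Arguments. Unset Strict Implicit. Unset Printing Implicit Defensive.
Import Order.TTheory GRing.Theory Num.Theory.
Import numFieldNormedType.Exports.
Local Open Scope ring_scope.
Local Open Scope classical_set_scope.

Definition dims (nin : nat) (w : nat -> nat) (l : nat) : nat :=
  if l is l'.+1 then w l' else nin.

Definition heav (R : realType) (m : nat) (z : 'cV[R]_m) : 'cV[R]_m :=
  \col_i (if 0 <= z i ord0 then 1 else 0).

(* A discrete-time LIF-SNN with input dim nin, L hidden layers, latency T,
   output dimension 1 (membrane potential output).  Index l : nat of the
   layer-dependent fields stands for layer l+1 of the paper
   (W l = W^{l+1}, bias l = b^{l+1}, u0 l = u^{l+1}(0), beta l = beta^{l+1},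
   theta l = vartheta^{l+1}); adec t = a_{t+1}.  Values for l >= L or t >= T
   are irrelevant. *)
Record LIFSNN (R : realType) (nin L T : nat) := MkLIFSNN {
  width : nat -> nat;
  W : forall l : nat, 'M[R]_(dims nin width l.+1, dims nin width l);
  bias : forall l : nat, 'cV[R]_(dims nin width l.+1);
  u0 : forall l : nat, 'cV[R]_(dims nin width l.+1);
  beta : nat -> R;
  theta : nat -> R;
  adec : nat -> R;
  Vdec : 'rV[R]_(dims nin width L);
  cdec : R
}.
Arguments width {R nin L T}.
Arguments W {R nin L T}.
Arguments bias {R nin L T}.
Arguments u0 {R nin L T}.
Arguments beta {R nin L T}.
Arguments theta {R nin L T}.
Arguments adec {R nin L T}.
Arguments Vdec {R nin L T}.
Arguments cdec {R nin L T}.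

Definition LIF_valid (R : realType) nin L T (N : LIFSNN R nin L T) : Prop :=
  forall l : nat, (l < L)%N -> 0 <= beta N l <= 1 /\ 0 < theta N l.

Section Dynamics.
Variables (R : realType) (nin L T : nat) (N : LIFSNN R nin L T).

Local Notation dim := (dims nin (width N)).

Definition preact (up : forall l, 'cV[R]_(dim l.+1)) (l : nat)
  (s : 'cV[R]_(dim l)) : 'cV[R]_(dim l.+1) :=
  beta N l *: up l + W N l *m s + bias N l.

(* spikes up x l = s^l(t), given the potentials up = u(t-1) of all layers
   and the (direct-encoded) input s^0(t) = x. *)
Fixpoint spikes (up : forall l, 'cV[R]_(dim l.+1)) (x : 'cV[R]_nin) (l : nat)
  {struct l} : 'cV[R]_(dim l) :=
  match l return 'cV[R]_(dim l) with
  | 0 => x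
  | l'.+1 => heav (preact up (spikes up x l') - theta N l' *: const_mx 1)
  end.

Definition newpot (up : forall l, 'cV[R]_(dim l.+1)) (x : 'cV[R]_nin)
  (l : nat) : 'cV[R]_(dim l.+1) :=
  preact up (spikes up x l) - theta N l *: spikes up x l.+1.

(* pot x t l = u^{l+1}(t) *)
Fixpoint pot (x : 'cV[R]_nin) (t : nat) : forall l, 'cV[R]_(dim l.+1) :=
  match t with
  | 0 => u0 N
  | t'.+1 => newpot (pot x t') x
  end.

Definition realize (x : 'cV[R]_nin) : R :=
  \sum_(t < T) adec N t * ((Vdec N *m spikes (pot x t) x L) ord0 ord0 + cdec N).

End Dynamics.

Definition normInf (R : realType) (n : nat) (x : 'cV[R]_n) : R :=
  \big[Num.max/0]_(i < n) `|x i ord0|.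

Definition diamInf (R : realType) (n : nat) (Om : set 'cV[R]_n) : R :=
  sup [set d | exists x y, Om x /\ Om y /\ d = normInf (x - y)].

From HB Require Import structures.
From mathcomp Require Import all_boot all_order all_algebra.
From mathcomp Require Import all_classical all_reals all_analysis.
From mathcomp Require Import lra.
Import Order.TTheory GRing.Theory Num.Theory.
Import numFieldNormedType.Exports.
Set Implicit Arguments. Unset Strict Implicit. Unset Printing Implicit Defensive.
Local Open Scope ring_scope.
Local Open Scope classical_set_scope.

(* Cut the coordinate box of Om into k^nin cells of side h, bounded by the
   hyperplanes x_i = a_i + j h with 0 < j < k.  With latency 1 and zero initial
   potential every LIF layer is a Heaviside layer.  The first hidden layer has one
   neuron per hyperplane, firing when x has passed it; the second layer reads off
   the base-k index c(x) of the cell of x, its neuron r firing iff r <= c(x).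
   Output weights g r - g (r - 1) then make the network output g (c(x)), where
   g c is the value of f at some point of Om in cell c.  Points of a common cell
   are h-close in sup norm, so the error is at most the oscillation of f at scale
   h: small h by uniform continuity, or h = diam / ceil(diam Gamma / eps) for
   Gamma-Lipschitz f. *)

Lemma sum_digits_lt (b n : nat) (d : 'I_n -> nat) : (forall i, d i < b)%N ->
  (\sum_(i < n) d i * b ^ i < b ^ n)%N.
Proof.
elim: n d => [|n IH] d ltdb; first by rewrite big_ord0 expn0.
rewrite big_ord_recr /=.
apply: (@leq_trans (b ^ n + d ord_max * b ^ n)%N).
  by rewrite ltn_add2r (IH (fun i => d (widen_ord (leqnSn n) i))).
by rewrite -mulSn expnS leq_mul2r ltdb orbT.
Qed.

Lemma sum_digits_inj (b n : nat) (d d' : 'I_n -> nat) :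
  (forall i, d i < b)%N -> (forall i, d' i < b)%N ->
  (\sum_(i < n) d i * b ^ i = \sum_(i < n) d' i * b ^ i)%N -> d =1 d'.
Proof.
elim: n d d' => [|n IH] d d' ltdb ltd'b; first by move=> _ [].
have shift (e : 'I_n.+1 -> nat) :
    (\sum_(i < n.+1) e i * b ^ i = e ord0 + b * \sum_(i < n) e (lift ord0 i) * b ^ i)%N.
  rewrite big_ord_recl expn0 muln1 big_distrr /=; congr (_ + _)%N.
  by apply: eq_bigr => i _; rewrite expnS mulnCA.
rewrite !shift => E.
have E0 : d ord0 = d' ord0.
  have := congr1 (modn^~ b) E.
  by rewrite !(addnC (_ ord0)) !(mulnC b) !modnMDl !modn_small.
have b0 : (0 < b)%N by apply: leq_ltn_trans (ltdb ord0).
move: E; rewrite E0 => /addnI /eqP; rewrite eqn_pmul2l // => /eqP E.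
move=> i; case: (unliftP ord0 i) => [j ->|-> //].
exact: (IH _ _ (fun i => ltdb _) (fun i => ltd'b _) E).
Qed.

Definition unpair (k n : nat) (p : 'I_(k * n)) : 'I_k * 'I_n :=
  enum_val (cast_ord (esym (mxvec_cast k n)) p).

Lemma big_unpair (V : nmodType) (k n : nat) (F : 'I_k -> 'I_n -> V) :
  \sum_(p < k * n) F (unpair p).1 (unpair p).2 = \sum_(j < k) \sum_(i < n) F j i.
Proof.
rewrite (reindex _ (curry_mxvec_bij _ _)) /= pair_bigA.
by apply: eq_bigr => -[j i] _; rewrite /unpair /mxvec_index cast_ordK enum_rankK.
Qed.

Lemma sum_telescope_prefix (R : pzRingType) (g : nat -> R) (c K : nat) : (c < K)%N ->
  \sum_(r < K) (g r - g r.-1) * (if (r <= c)%N then 1 else 0) = g c - g 0%N.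
Proof.
move=> ltcK; transitivity (\sum_(r < c.+1) (g r - g r.-1)).
  rewrite (big_ord_widen K (fun r => g r - g r.-1) ltcK) [RHS]big_mkcond.
  by apply: eq_bigr => r _; rewrite ltnS; case: ifP; rewrite ?mulr1 ?mulr0.
rewrite big_ord_recl subrr add0r.
by rewrite -(big_mkord xpredT (fun i => g i.+1 - g i)) telescope_sumr.
Qed.

Lemma inf_spread_bounds (R : realType) (S : set R) (c s : R) :
  (forall s t, S s -> S t -> t - s <= c) -> S s -> inf S <= s <= inf S + c.
Proof.
move=> spread Ss; apply/andP; split.
  by apply: ge_inf => //; exists (s - c) => t St; have := spread _ _ St Ss; lra.
rewrite -lerBlDr; apply: lb_le_inf; first by exists s.
by move=> t St; have := spread _ _ St Ss; lra.
Qed.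

Lemma compact_uniform_continuity (R : realType) (V W : normedModType R) (A : set V)
    (f : V -> W) (e : R) :
  compact A -> {within A, continuous f} -> 0 < e ->
  exists2 d, 0 < d & forall x y, A x -> A y -> `|x - y| < d -> `|f x - f y| <= e.
Proof.
move=> cA fc e0.
have cont x : A x -> exists2 r, 0 < r &
    forall w, A w -> `|x - w| < r -> `|f x - f w| < e / 2.
  move=> Ax; have := (subspace_continuousP _ _).1 fc x Ax.
  move/cvgrPdist_lt => /(_ (e / 2)); rewrite divr_gt0 // => /(_ isT).
  move=> /nbhs_ballP[r r0 near_x]; exists r => // w Aw xw.
  by apply: near_x => //; rewrite -ball_normE.
have cover : near_covering_within A.
  by apply/near_covering_withinP; apply/compact_near_coveringP.
have : \forall d \near (0:R)^'+, A `<=`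
    (fun y => forall z, A z -> `|y - z| < d -> `|f y - f z| <= e).
  apply: (cover R (0:R)^'+
    (fun d y => forall z, A z -> `|y - z| < d -> `|f y - f z| <= e)) => x Ax.
  have [r r0 near_x] := cont x Ax.
  near=> y d => /= Ay z Az yz.
  have xy : `|x - y| < r / 2.
    near: y; apply/nbhs_ballP; exists (r / 2); first by rewrite /= divr_gt0.
    by move=> y; rewrite -ball_normE.
  have dr : d < r / 2 by near: d; apply: nbhs_right_lt; lra.
  have xz : `|x - z| < r.
    have -> : x - z = (x - y) + (y - z) by rewrite addrA subrK.
    by apply: le_lt_trans (ler_normD _ _) _; lra.
  have fxy : `|f x - f y| < e / 2 by apply: near_x => //; lra.
  have -> : f y - f z = (f x - f z) - (f x - f y) by rewrite opprB [RHS]addrC addrA subrK.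
  by apply: le_trans (ler_normB _ _) _; have := near_x z Az xz; lra.
move=> /(filterI (nbhs_right_gt (0:R)))/filter_ex[d [d0 unif_d]].
by exists d => // x y Ax Ay; apply: unif_d.
Unshelve. all: by end_near.
Qed.

Lemma absz_max1_exp (m : int) (n : nat) : 0 <= m ->
  `|Num.max (m ^+ n) 1|%N = (`|Num.max m 1| ^ n)%N.
Proof.
rewrite le_eqVlt => /orP[/eqP <-|m_gt0].
  by rewrite expr0n; case: n => [|n] /=; rewrite exp1n.
have m1 : 1 <= m by [].
by rewrite !max_l ?abszX ?exprn_ege1.
Qed.

Section SupNorm.
Variables (R : realType) (n : nat).
Implicit Types (x y : 'cV[R]_n) (Om : set 'cV[R]_n).

Lemma normInf_ge0 x : 0 <= normInf x.
Proof. exact: bigmax_ge_id. Qed.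

Lemma ler_coord_normInf x i : `|x i ord0| <= normInf x.
Proof. exact: (le_bigmax 0 (fun i => `|x i ord0|)). Qed.

Lemma normInf_le x d : 0 <= d -> (forall i, `|x i ord0| <= d) -> normInf x <= d.
Proof. by move=> d0 le_d; apply: bigmax_le. Qed.

Lemma normInfE x : normInf x = `|x|.
Proof.
apply/le_anti/andP; split.
  apply: normInf_le => // i; rewrite [leRHS]/Num.norm /= mx_normrE.
  exact: (le_bigmax 0 (fun ij : 'I_n * 'I_1 => `|x ij.1 ij.2|) (i, ord0)).
rewrite [leLHS]/Num.norm /= mx_normrE; apply: bigmax_le => [|[i j] _ /=].
  exact: normInf_ge0.
by rewrite (ord1 j) ler_coord_normInf.
Qed.

Lemma normInf_le_diamInf Om x y : compact Om -> Om x -> Om y ->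
  normInf (x - y) <= diamInf Om.
Proof.
move=> /compact_bounded[M [_ bndM]] Ox Oy; apply: ub_le_sup; last by exists x, y.
have bnd z : Om z -> `|z| <= M + 1 by move=> Oz; apply: (bndM (M + 1)) => //; rewrite ltrDl.
exists ((M + 1) + (M + 1)) => _ [u [v [Ou [Ov ->]]]].
by rewrite normInfE; apply: le_trans (ler_normB _ _) _; apply: lerD; apply: bnd.
Qed.

Lemma diamInf_ge0 Om : 0 <= diamInf Om.
Proof.
rewrite /diamInf; set S := [set d | _].
have [[[_ [x [y [Ox [Oy _]]]]] ubS] | noS] := pselect (has_sup S); last by rewrite sup_out.
by apply: le_trans (normInf_ge0 (x - y)) _; apply: ub_le_sup => //; exists x, y.
Qed.

Lemma diamInf_le Om c : 0 <= c ->
  (forall x y, Om x -> Om y -> normInf (x - y) <= c) -> diamInf Om <= c.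
Proof.
rewrite /diamInf; set S := [set d | _] => c0 le_c.
have [->|/set0P neS] := eqVneq S set0; first by rewrite sup0.
by apply: ge_sup => // _ [x [y [Ox [Oy ->]]]]; apply: le_c.
Qed.

Lemma lipschitz_diamInf_mul_ge0 Om (f : 'cV[R]_n -> R) (Gamma : R) :
  (forall x y, Om x -> Om y -> `|f x - f y| <= Gamma * normInf (x - y)) ->
  0 <= diamInf Om * Gamma.
Proof.
move=> lipf; have [Gamma0|Gamma_neg] := lerP 0 Gamma.
  by rewrite mulr_ge0 ?diamInf_ge0.
suff -> : diamInf Om = 0 by rewrite mul0r.
apply/le_anti; rewrite diamInf_ge0 andbT; apply: diamInf_le => // x y Ox Oy.
have := lipf x y Ox Oy; have := normr_ge0 (f x - f y); have := normInf_ge0 (x - y).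
nra.
Qed.

End SupNorm.

Section Grid.
Variables (R : realType) (nin k : nat).

Definition level_set (a h v : R) : {set 'I_k} :=
  [set j : 'I_k | (0 < j)%N && (a + j%:R * h <= v)].

Lemma card_level_set_lt a h v : (0 < k)%N -> (#|level_set a h v| < k)%N.
Proof.
move=> k0; rewrite -[ltnRHS]card_ord; apply: proper_card; apply/properP.
by split; [exact: subset_predT | exists (Ordinal k0); rewrite // inE ltnn].
Qed.

Lemma level_set_proper a h v w : 0 <= h -> a <= v -> h < w - v ->
  w <= a + k%:R * h -> level_set a h v \proper level_set a h w.
Proof.
move=> h0 av hvw wk; have {}h0 : 0 < h.
  by rewrite lt_def h0 andbT; apply: contraTneq wk => ->; rewrite mulr0; lra.
apply/properP; split.
  by apply/fintype.subsetP => j; rewrite !inE => /andP[-> /le_trans]; apply; lra.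
(* the first threshold a + j.+1 h above v is still below w, as w - v > h *)
set j := Num.truncn ((v - a) / h).
have /andP[lej ltj] : j%:R <= (v - a) / h < j.+1%:R.
  by apply: truncn_itv; rewrite divr_ge0 ?subr_ge0 // ltW.
rewrite ler_pdivlMr // in lej; rewrite ltr_pdivrMr // in ltj.
have step : a + j.+1%:R * h = a + j%:R * h + h by rewrite -addn1 natrD mulrDl mul1r addrA.
have ltjk : (j.+1 < k)%N by rewrite -(ltr_nat R) -(ltr_pM2r h0); lra.
by exists (Ordinal ltjk); rewrite !inE /= step ?ltNge; lra.
Qed.

Lemma level_gap_le a h v w : 0 <= h -> a <= v -> v <= w -> w <= a + k%:R * h ->
  #|level_set a h v| = #|level_set a h w| -> w - v <= h.
Proof.
move=> h0 av vw wk eq_card; rewrite leNgt; apply/negP => hvw.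
by have := proper_card (level_set_proper h0 av hvw wk); rewrite eq_card ltnn.
Qed.

Lemma sum_level_set a h v :
  \sum_(j < k.+1) (if (0 < j < k)%N then 1 else 0) * (if a + j%:R * h <= v then 1 else 0)
  = #|level_set a h v|%:R :> R.
Proof.
rewrite big_ord_recr /= ltnn andbF mul0r addr0 -sumr_const [RHS]big_mkcond /=.
apply: eq_bigr => j _; rewrite inE ltn_ord andbT.
by case: (0 < j)%N; case: (_ <= v); rewrite /= ?mulr1 ?mul0r ?mulr0.
Qed.

Definition grid_code (a : 'I_nin -> R) (h : R) (x : 'cV[R]_nin) : nat :=
  \sum_(i < nin) #|level_set (a i) h (x i ord0)| * k ^ i.

Lemma grid_code_lt a h x : (0 < k)%N -> (grid_code a h x < k ^ nin)%N.
Proof. by move=> k0; apply: sum_digits_lt => i; apply: card_level_set_lt. Qed.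

Lemma grid_code_close (a : 'I_nin -> R) h (x y : 'cV[R]_nin) : (0 < k)%N -> 0 <= h ->
  (forall i, a i <= x i ord0 <= a i + k%:R * h) ->
  (forall i, a i <= y i ord0 <= a i + k%:R * h) ->
  grid_code a h x = grid_code a h y -> normInf (x - y) <= h.
Proof.
move=> k0 h0 box_x box_y eq_code; apply: normInf_le => // i.
have eq_card : #|level_set (a i) h (x i ord0)| = #|level_set (a i) h (y i ord0)|.
  by apply: (sum_digits_inj _ _ eq_code) => j; apply: card_level_set_lt.
have /andP[ax xb] := box_x i; have /andP[ay yb] := box_y i.
rewrite !mxE ler_norml; case: (lerP (x i ord0) (y i ord0)) => lexy.
  by have := level_gap_le h0 ax lexy yb eq_card; lra.
by have := level_gap_le h0 ay (ltW lexy) xb (esym eq_card); lra.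
Qed.

Definition grid_width (l : nat) : nat := if l is 0 then (k.+1 * nin)%N else (k ^ nin)%N.

Local Notation gdim := (dims nin grid_width).

(* The neurons j = 0 and j = k of the first layer only pad it to width
   (k + 1) nin; they get weight 0. *)
Definition grid_weight l : 'M[R]_(gdim l.+1, gdim l) :=
  match l with
  | 0 => \matrix_(p, q) ((unpair p).2 == q)%:R
  | 1 => \matrix_(r, p) (if (0 < (unpair p).1 < k)%N then (k ^ (unpair p).2)%:R else 0)
  | _ => 0
  end.

Definition grid_bias (a : 'I_nin -> R) (h : R) l : 'cV[R]_(gdim l.+1) :=
  match l with
  | 0 => \col_p (1 - (a (unpair p).2 + ((unpair p).1)%:R * h))
  | 1 => \col_r (1 - r%:R)
  | _ => 0
  end.

(* Since 0.-1 = 0 the output weight of neuron 0 vanishes and the bias g 0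
   starts the telescoping sum. *)
Definition grid_net (a : 'I_nin -> R) (h : R) (g : nat -> R) : LIFSNN R nin 2 1 :=
  @MkLIFSNN R nin 2 1 grid_width grid_weight (grid_bias a h) (fun _ => 0) (fun _ => 0)
    (fun _ => 1) (fun _ => 1) (\row_r (g r - g r.-1)) (g 0%N).

Lemma grid_net_valid a h g : LIF_valid (grid_net a h g).
Proof. by move=> l _; rewrite /= lexx ler01. Qed.

Lemma grid_layer1_spikes a h g x p :
  spikes (pot (grid_net a h g) x 0) x 1 p ord0 =
  if a (unpair p).2 + ((unpair p).1)%:R * h <= x (unpair p).2 ord0 then 1 else 0.
Proof.
rewrite /= /heav /preact /= !mxE (bigD1 (unpair p).2) //= big1 => [|i /negbTE neq_i].
  rewrite mxE eqxx mul1r mul0r add0r addr0 mul1r.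
  by congr (if _ then _ else _); apply/idP/idP; lra.
by rewrite mxE eq_sym neq_i mul0r.
Qed.

Lemma grid_layer2_preact a h g x r :
  preact (pot (grid_net a h g) x 0) (spikes (pot (grid_net a h g) x 0) x 1) r ord0
  = (grid_code a h x)%:R + (1 - r%:R).
Proof.
rewrite /preact !mxE mulr0 add0r; congr (_ + _).
under eq_bigr => p _ do rewrite grid_layer1_spikes mxE.
rewrite (big_unpair (fun j i => (if (0 < j < k)%N then (k ^ i)%:R else 0) *
  (if a i + j%:R * h <= x i ord0 then 1 else 0))) /= exchange_big natr_sum.
apply: eq_bigr => i _; rewrite natrM -sum_level_set mulr_suml; apply: eq_bigr => j _.
by case: ifP => _; rewrite ?mul1r ?mul0r // mulrC.
Qed.

Lemma grid_layer2_spikes a h g x r :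
  spikes (pot (grid_net a h g) x 0) x 2 r ord0 = if (r <= grid_code a h x)%N then 1 else 0.
Proof.
rewrite [LHS]mxE -[heav _]/(spikes _ x 1) mxE grid_layer2_preact !mxE mul1r.
by rewrite addrA addrAC addrK subr_ge0 ler_nat.
Qed.

Lemma grid_net_realize a h g x : (0 < k)%N ->
  realize (grid_net a h g) x = g (grid_code a h x).
Proof.
move=> k0; rewrite /realize big_ord1 mul1r !mxE.
under eq_bigr => r _ do rewrite grid_layer2_spikes mxE.
by rewrite sum_telescope_prefix ?grid_code_lt // subrK.
Qed.

Lemma grid_net_approx (Om : set 'cV[R]_nin) (f : 'cV[R]_nin -> R) (eps h : R) :
  (0 < k)%N -> 0 <= h ->
  (forall x y, Om x -> Om y -> normInf (x - y) <= k%:R * h) ->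
  (forall x y, Om x -> Om y -> normInf (x - y) <= h -> `|f x - f y| <= eps) ->
  exists N : LIFSNN R nin 2 1,
    [/\ LIF_valid N, forall x, Om x -> `|realize N x - f x| <= eps,
        width N 0 = (k.+1 * nin)%N & width N 1 = (k ^ nin)%N].
Proof.
move=> k0 h0 spread modulus.
pose a i := inf [set x i ord0 | x in Om].
have box x : Om x -> forall i, a i <= x i ord0 <= a i + k%:R * h.
  move=> Ox i; apply: inf_spread_bounds; last by exists x.
  move=> _ _ [u Ou <-] [v Ov <-]; apply: le_trans (spread _ _ Ov Ou).
  by apply: le_trans (ler_coord_normInf _ i); rewrite !mxE ler_norm.
pose g c := f (xget 0 [set y | Om y /\ grid_code a h y = c]).
exists (grid_net a h g); split=> // [|x Ox]; first exact: grid_net_valid.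
rewrite grid_net_realize //.
have [Oy code_y] := xgetPex 0
  (ex_intro (fun y => Om y /\ grid_code a h y = grid_code a h x) x (conj Ox erefl)).
by apply: modulus => //; apply: (grid_code_close (a := a)) => //; apply: box.
Qed.

End Grid.

Section Approximation.
Variables (R : realType) (nin : nat) (Om : set 'cV[R]_nin) (f : 'cV[R]_nin -> R).
Hypothesis cOm : compact Om.

Lemma continuous_net_approx eps : {within Om, continuous f} -> 0 < eps ->
  exists N : LIFSNN R nin 2 1,
    LIF_valid N /\ forall x, Om x -> `|realize N x - f x| <= eps.
Proof.
move=> fc eps0; have [d d0 ucf] := compact_uniform_continuity cOm fc eps0.
pose h := d / 2; have h0 : 0 < h by rewrite divr_gt0.
pose k := (Num.truncn (diamInf Om / h)).+1.
have spread x y : Om x -> Om y -> normInf (x - y) <= k%:R * h.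
  move=> Ox Oy; apply: le_trans (normInf_le_diamInf cOm Ox Oy) _.
  by rewrite -ler_pdivrMr // ltW // truncnS_gt.
have modulus x y : Om x -> Om y -> normInf (x - y) <= h -> `|f x - f y| <= eps.
  move=> Ox Oy le_h; apply: ucf => //; rewrite -normInfE.
  by apply: le_lt_trans le_h _; rewrite /h; lra.
by have [N []] := grid_net_approx (ltn0Sn _) (ltW h0) spread modulus; exists N.
Qed.

Lemma lipschitz_net_approx eps Gamma : 0 < eps ->
  (forall x y, Om x -> Om y -> `|f x - f y| <= Gamma * normInf (x - y)) ->
  let k : int := Num.ceil (diamInf Om / eps * Gamma) in
  exists N : LIFSNN R nin 2 1,
    LIF_valid N /\ (forall x, Om x -> `|realize N x - f x| <= eps) /\
    width N 0 = ((`|Num.max k 1| + 1) * nin)%N /\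
    width N 1 = `|Num.max (k ^+ nin) 1|%N.
Proof.
move=> eps0 lipf k; set D := diamInf Om.
have k0 : 0 <= k.
  rewrite ceil_ge0 (lt_le_trans (ltrN10 R)) // mulrAC divr_ge0 ?(ltW eps0) //.
  exact: lipschitz_diamInf_mul_ge0 lipf.
pose K := `|Num.max k 1|%N.
have K0 : (0 < K)%N by rewrite absz_gt0 gt_eqF // lt_max ltr01 orbT.
have le_K : D / eps * Gamma <= K%:R.
  rewrite natr_absz ger0_norm; last by rewrite le_max k0.
  by apply: le_trans (ceil_ge _) _; rewrite ler_int le_max lexx.
pose h := D / K%:R.
have spread x y : Om x -> Om y -> normInf (x - y) <= K%:R * h.
  by move=> Ox Oy; rewrite mulrC divfK ?pnatr_eq0 -?lt0n //; apply: normInf_le_diamInf.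
have modulus x y : Om x -> Om y -> normInf (x - y) <= h -> `|f x - f y| <= eps.
  move=> Ox Oy le_h; apply: le_trans (lipf x y Ox Oy) _.
  have [Gamma_le0|Gamma_gt0] := lerP Gamma 0.
    by apply: le_trans (ltW eps0); rewrite mulr_le0_ge0 ?normInf_ge0.
  apply: le_trans (ler_wpM2l (ltW Gamma_gt0) le_h) _.
  rewrite mulrA ler_pdivrMr ?ltr0n //.
  by move: le_K; rewrite mulrAC ler_pdivrMr // mulrC [eps * _]mulrC.
have h0 : 0 <= h by rewrite divr_ge0 ?diamInf_ge0.
have [N [vN approxN w0 w1]] := grid_net_approx K0 h0 spread modulus.
by exists N; rewrite w0 w1 addn1 absz_max1_exp.
Qed.

End Approximation.

Theorem theorem3p2 (R : realType) (nin : nat) (Om : set 'cV[R]_nin)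
  (f : 'cV[R]_nin -> R) :
  compact Om -> {within Om, continuous f} ->
  forall eps : R, 0 < eps ->
  (exists N : LIFSNN R nin 2 1,
      LIF_valid N /\ forall x, Om x -> `|realize N x - f x| <= eps) /\
  (forall Gamma : R,
     (forall x y, Om x -> Om y -> `|f x - f y| <= Gamma * normInf (x - y)) ->
     let k : int := Num.ceil (diamInf Om / eps * Gamma) in
     exists N : LIFSNN R nin 2 1,
       LIF_valid N /\ (forall x, Om x -> `|realize N x - f x| <= eps) /\
       width N 0 = ((`|Num.max k 1| + 1) * nin)%N /\
       width N 1 = `|Num.max (k ^+ nin) 1|%N).
Proof.
move=> cOm fc eps eps0; split; first exact: continuous_net_approx.
by move=> Gamma; apply: lipschitz_net_approx.
Qed.
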